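(* In the setting of problem (P) under the standing assumptions, run Algorithm LCPG with $\lim_k\eta^k=\eta$, and suppose every feasible point of (P) satisfies MFCQ, so that there is a constant $B>0$ with $\|\lambda^{k+1}\|\le B$ for all $k$. Let $D:=\sqrt{(\psi_0(x^0)-\psi_0^* )/L_0}$ and let $\alpha_0,\dots,\alpha_K>0$ be nondecreasing. Then $$\sum_{k=0}^K\alpha_k\|\partial_x\mathcal{L}(x^{k+1},\lambda^{k+1})\|_-^2\le8(L_0+B\|L\|)^2D^2\alpha_K,$$ $$\sum_{k=0}^K\alpha_k\langle\lambda^{k+1},|\psi(x^{k+1})-\eta|\rangle\le2B\|L\|D^2\alpha_K+B\sum_{k=0}^K\alpha_k\|\eta-\eta^k\|,$$ where $|\cdot|$ is taken componentwise. Consequently, if $\hat k\in\{0,\dots,K\}$ is drawn with $\Pr(\hat k=k)=\alpha_k/\sum_{j=0}^K\alpha_j$, then $x^{\hat k+1}$ is a randomized $\epsilon_K$ type-I KKT point of (P) (with multiplier $\lambda^{\hat k+1}$) for $$\epsilon_K=\frac{1}{\sum_{k=0}^K\alpha_k}\max\Big\{8(L_0+B\|L\|)^2D^2\alpha_K,\ 2B\|L\|D^2\alpha_K+B\sum_{k=0}^K\alpha_k\|\eta-\eta^k\|\Big\}.$$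
   Context: Problem (P): minimize $\psi_0(x):=f_0(x)+\chi_0(x)$ over $x\in\mathbb{R}^d$ subject to $\psi_i(x):=f_i(x)+\chi_i(x)\le\eta_i$, $i\in[m]:=\{1,\dots,m\}$. Standing assumptions: $\chi_0$ is proper, convex, lower semicontinuous; each $\chi_i$ ($i\in[m]$) is convex and continuous on $\mathrm{dom}\,\chi_0$; each $f_i$ ($i=0,\dots,m$) is differentiable with $L_i$-Lipschitz gradient on $\mathrm{dom}\,\chi_0$; $L:=(L_1,\dots,L_m)^\top$; the optimal value $\psi_0^*$ of (P) is finite; the feasible set $\mathcal{X}:=\{x\in\mathrm{dom}\,\chi_0:\psi_i(x)\le\eta_i,\ i\in[m]\}$ is nonempty and compact. Write $\psi=(\psi_1,\dots,\psi_m)^\top$, $\eta=(\eta_1,\dots,\eta_m)^\top$; vector inequalities are componentwise. Subdifferential: $\partial\psi_i(x):=\nabla f_i(x)+\partial\chi_i(x)$ (convex subdifferential of $\chi_i$, Minkowski sum). Lagrangian $\mathcal{L}(x,\lambda)=\psi_0(x)+\sum_{i=1}^m\lambda_i(\psi_i(x)-\eta_i)$ and $\partial_x\mathcal{L}(x,\lambda):=\partial\psi_0(x)+\sum_i\lambda_i\partial\psi_i(x)$. For a set $S$, $\|S\|_-:=\inf\{\|s\|:s\in S\}$. Algorithm LCPG: given $x^0\in\mathrm{dom}\,\chi_0$ and $\eta^0\in\mathbb{R}^m$ with $\psi(x^0)<\eta^0<\eta$. For $k=0,1,\dots$: define for $i=0,\dots,m$ the function $\psi_i^k(x):=f_i(x^k)+\langle\nabla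 f_i(x^k),x-x^k\rangle+\frac{L_i}{2}\|x-x^k\|^2+\chi_i(x)$; let $x^{k+1}$ be the minimizer of $\psi_0^k(x)$ subject to $\psi_i^k(x)\le\eta_i^k$, $i\in[m]$ (the $k$-th subproblem); set $\eta^{k+1}=\eta^k+\delta^k$ with $\delta^k\in\mathbb{R}^m$, $\delta^k>0$, chosen so that $\eta^{k+1}<\eta$. A vector $\lambda^{k+1}\in\mathbb{R}^m_+$ is a Lagrange multiplier of the $k$-th subproblem if $0\in\partial\psi_0^k(x^{k+1})+\sum_i\lambda_i^{k+1}\partial\psi_i^k(x^{k+1})$ and $\lambda_i^{k+1}(\psi_i^k(x^{k+1})-\eta_i^k)=0$ for all $i\in[m]$, where $\partial\psi_i^k(x)=\nabla f_i(x^k)+L_i(x-x^k)+\partial\chi_i(x)$. MFCQ: a point $x$ satisfies MFCQ if there is $z\in\mathbb{R}^d$ with $\langle z,v\rangle\le0$ for all $v$ in the normal cone $N_{\mathrm{dom}\,\chi_0}(x)$ and $\max_{v\in\partial\psi_i(x)}\langle v,z\rangle<0$ for every $i\in\mathcal{A}(x):=\{i\in[m]:\psi_i(x)=\eta_i\}$. Type-I KKT: $x$ is an $\epsilon$ type-I KKT point of (P) if $\psi(x)\le\eta$ and there is $\lambda\in\mathbb{R}^m_+$ with $\|\partial_x\mathcal{L}(x,\lambda)\|_-^2\le\epsilon$ and $-\sum_i\lambda_i(\psi_i(x)-\eta_i)\le\epsilon$. It is a randomized $\epsilon$ type-I KKT point if $x,\lambda$ are random, feasible, and these two inequalities hold in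 expectation. *)

From HB Require Import structures.
From mathcomp Require Import all_boot all_order all_algebra.
From mathcomp Require Import all_classical all_reals all_analysis.
Set Implicit Arguments.
Unset Strict Implicit.
Unset Printing Implicit Defensive.
Import Order.TTheory GRing.Theory Num.Theory.
Import numFieldNormedType.Exports.
Local Open Scope classical_set_scope.
Local Open Scope ring_scope.

Section LCPG.
Context {R : realType}.

Definition dotv {n} (u v : 'rV[R]_n) : R := \sum_(i < n) u ord0 i * v ord0 i.
Definition enorm {n} (u : 'rV[R]_n) : R := Num.sqrt (dotv u u).

Definition edom {n} (h : 'rV[R]_n -> \bar R) : set 'rV[R]_n :=
  [set x | (h x < +oo)%E].

Definition proper_efun {n} (h : 'rV[R]_n -> \bar R) : Prop :=
  (forall x, h x != -oo%E) /\ exists x, h x \is a fin_num.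

Definition convex_efun {n} (h : 'rV[R]_n -> \bar R) : Prop :=
  forall (x y : 'rV[R]_n) (t : R), 0 < t < 1 ->
    (h (t *: x + (1 - t) *: y)%R <= (t%:E * h x + (1 - t)%:E * h y)%E)%E.

Definition subdiff {n} (h : 'rV[R]_n -> \bar R) (x : 'rV[R]_n) : set 'rV[R]_n :=
  [set v | h x \is a fin_num /\ forall y, (h x + (dotv v (y - x))%:E <= h y)%E].

Definition ncone {n} (C : set 'rV[R]_n) (x : 'rV[R]_n) : set 'rV[R]_n :=
  [set v | forall y, C y -> dotv v (y - x) <= 0].

(* || S ||_- := inf { ||s|| : s in S }  (= +oo for S empty) *)
Definition normminus {n} (S : set 'rV[R]_n) : \bar R :=
  ereal_inf [set (enorm s)%:E | s in S].

(* data of problem (P); index 0 = objective, 'I_m = constraints 1..m *)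
Record problem (d m : nat) := Problem {
  f0 : 'rV[R]_d -> R;
  g0 : 'rV[R]_d -> 'rV[R]_d;
  chi0 : 'rV[R]_d -> \bar R;
  L0 : R;
  fc : 'I_m -> 'rV[R]_d -> R;
  gc : 'I_m -> 'rV[R]_d -> 'rV[R]_d;
  chic : 'I_m -> 'rV[R]_d -> \bar R;
  Lc : 'rV[R]_m;
  etaP : 'rV[R]_m
}.

Section Problem.
Variables (d m : nat) (P : problem d m).

Definition domX := edom (chi0 P).

Definition psi0 (x : 'rV[R]_d) : \bar R := ((f0 P x)%:E + chi0 P x)%E.
Definition psi (i : 'I_m) (x : 'rV[R]_d) : \bar R := ((fc P i x)%:E + chic P i x)%E.

Definition feas : set 'rV[R]_d :=
  [set x | domX x /\ forall i, (psi i x <= (etaP P ord0 i)%:E)%E].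

Definition psi0star : \bar R := ereal_inf (psi0 @` feas).

Definition smooth_on (f : 'rV[R]_d -> R) (g : 'rV[R]_d -> 'rV[R]_d) (L : R) : Prop :=
  0 <= L /\
  (forall x, domX x -> differentiable f x /\ forall v, 'd f x v = dotv (g x) v) /\
  (forall x y, domX x -> domX y -> enorm (g x - g y) <= L * enorm (x - y)).

Definition standing_assumptions : Prop :=
  [/\ proper_efun (chi0 P), convex_efun (chi0 P) & lower_semicontinuous (chi0 P)] /\
  (forall i, convex_efun (chic P i) /\ (forall x, chic P i x != -oo%E) /\
             (forall x, domX x -> chic P i x \is a fin_num) /\
             {within domX, continuous (fun x => fine (chic P i x))}) /\
  (smooth_on (f0 P) (g0 P) (L0 P) /\
   forall i, smooth_on (fc P i) (gc P i) (Lc P ord0 i)) /\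
  psi0star \is a fin_num /\
  (feas !=set0 /\ compact feas).

Definition subdiff_psi (i : 'I_m) (x : 'rV[R]_d) : set 'rV[R]_d :=
  [set gc P i x + v | v in subdiff (chic P i) x].

Definition subdiffL (x : 'rV[R]_d) (lam : 'rV[R]_m) : set 'rV[R]_d :=
  [set w | exists v0 (vs : 'I_m -> 'rV[R]_d),
     [/\ subdiff (chi0 P) x v0, (forall i, subdiff (chic P i) x (vs i)) &
         w = (g0 P x + v0) + \sum_(i < m) lam ord0 i *: (gc P i x + vs i)]].

Definition MFCQ (x : 'rV[R]_d) : Prop :=
  exists z : 'rV[R]_d,
    (forall v, ncone domX x v -> dotv z v <= 0) /\
    forall i, psi i x = (etaP P ord0 i)%:E ->
      (ereal_sup [set (dotv v z)%:E | v in subdiff_psi i x] < 0)%E.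

Definition model (f : 'rV[R]_d -> R) (g : 'rV[R]_d -> 'rV[R]_d) (L : R)
  (chi : 'rV[R]_d -> \bar R) (xk x : 'rV[R]_d) : \bar R :=
  ((f xk + dotv (g xk) (x - xk) + L / 2 * enorm (x - xk) ^+ 2)%:E + chi x)%E.
Definition psi0k xk := model (f0 P) (g0 P) (L0 P) (chi0 P) xk.
Definition psik i xk := model (fc P i) (gc P i) (Lc P ord0 i) (chic P i) xk.

Definition subprob_sol (xk : 'rV[R]_d) (etak : 'rV[R]_m) (x' : 'rV[R]_d) : Prop :=
  (forall i, (psik i xk x' <= (etak ord0 i)%:E)%E) /\
  forall y, (forall i, (psik i xk y <= (etak ord0 i)%:E)%E) ->
    (psi0k xk x' <= psi0k xk y)%E.

Definition subprob_multiplier (xk : 'rV[R]_d) (etak : 'rV[R]_m)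
  (x' : 'rV[R]_d) (lam : 'rV[R]_m) : Prop :=
  [/\ forall i, 0 <= lam ord0 i,
      (exists v0 (vs : 'I_m -> 'rV[R]_d),
         [/\ subdiff (chi0 P) x' v0, (forall i, subdiff (chic P i) x' (vs i)) &
             0 = (g0 P xk + L0 P *: (x' - xk) + v0) +
                 \sum_(i < m) lam ord0 i *:
                    (gc P i xk + Lc P ord0 i *: (x' - xk) + vs i)]) &
      forall i, ((lam ord0 i)%:E * (psik i xk x' - (etak ord0 i)%:E) = 0)%E].

Definition rand_typeI_KKT (K : nat) (p : nat -> R) (xs : nat -> 'rV[R]_d)
  (ls : nat -> 'rV[R]_m) (eps : R) : Prop :=
  [/\ (forall k, (k <= K)%N -> 0 <= p k) /\ \sum_(k < K.+1) p k = 1,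
      (forall k, (k <= K)%N -> p k != 0 ->
         feas (xs k) /\ forall i, 0 <= ls k ord0 i),
      (\sum_(k < K.+1) (p k)%:E *
         (normminus (subdiffL (xs k) (ls k)) * normminus (subdiffL (xs k) (ls k)))
         <= eps%:E)%E &
      \sum_(k < K.+1) p k *
         (- \sum_(i < m) ls k ord0 i * (fine (psi i (xs k)) - etaP P ord0 i))
         <= eps].

End Problem.
End LCPG.

From HB Require Import structures.
From mathcomp Require Import all_boot all_order all_algebra.
From mathcomp Require Import all_classical all_reals all_analysis.
From mathcomp Require Import ring lra.
Import Order.TTheory GRing.Theory Num.Theory.
Import numFieldNormedType.Exports.
Local Open Scope classical_set_scope.
Local Open Scope ring_scope.

(** Each LCPG step is a sufficient-decrease step: testing the KKT system of the
    subproblem against [x^k - x^{k+1}], with the subgradient inequalities of the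
    [chi_i], the descent lemma for [f_0] and complementary slackness, gives
    [psi_0(x^{k+1}) + L_0/2 |x^{k+1} - x^k|^2 <= psi_0(x^k)], so the squared
    steps sum to at most [2 D^2].  The KKT vector of the subproblem, with the
    gradients re-evaluated at [x^{k+1}], lies in the subdifferential of the
    Lagrangian at [(x^{k+1}, lambda^{k+1})] and has norm at most
    [2 (L_0 + B |L|) |x^{k+1} - x^k|]; complementary slackness and the descent
    lemma for the [f_i] bound the complementarity violation by
    [B |eta - eta^k| + B |L| |x^{k+1} - x^k|^2].  Summing against the
    nondecreasing weights and normalising gives the randomized KKT point. *)

Section EuclideanRowVector.
Context {R : realType} {n : nat}.
Implicit Types u v w : 'rV[R]_n.

Lemma dotvC u v : dotv u v = dotv v u.
Proof. by apply: eq_bigr => i _; rewrite mulrC. Qed.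

Lemma dotvDl u v w : dotv (u + v) w = dotv u w + dotv v w.
Proof. by rewrite /dotv -big_split; apply: eq_bigr => i _; rewrite !mxE mulrDl. Qed.

Lemma dotvDr u v w : dotv w (u + v) = dotv w u + dotv w v.
Proof. by rewrite dotvC dotvDl !(dotvC w). Qed.

Lemma dotvZl (a : R) u v : dotv (a *: u) v = a * dotv u v.
Proof. by rewrite /dotv mulr_sumr; apply: eq_bigr => i _; rewrite !mxE mulrA. Qed.

Lemma dotvZr (a : R) u v : dotv v (a *: u) = a * dotv v u.
Proof. by rewrite dotvC dotvZl dotvC. Qed.

Lemma dotvNl u v : dotv (- u) v = - dotv u v.
Proof. by rewrite -scaleN1r dotvZl mulN1r. Qed.

Lemma dotvNr u v : dotv v (- u) = - dotv v u.
Proof. by rewrite dotvC dotvNl dotvC. Qed.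

Lemma dotvBl u v w : dotv (u - v) w = dotv u w - dotv v w.
Proof. by rewrite dotvDl dotvNl. Qed.

Lemma dotvBr u v w : dotv w (u - v) = dotv w u - dotv w v.
Proof. by rewrite dotvDr dotvNr. Qed.

Lemma dotv0l v : dotv 0 v = 0.
Proof. by rewrite /dotv big1 // => i _; rewrite mxE mul0r. Qed.

Lemma dotv_suml (I : finType) (F : I -> 'rV[R]_n) v :
  dotv (\sum_(i : I) F i) v = \sum_(i : I) dotv (F i) v.
Proof.
apply: (big_ind2 (fun a b => dotv a v = b)) => [|a b c e <- <-|//].
  exact: dotv0l.
by rewrite dotvDl.
Qed.

Lemma dotvv_ge0 v : 0 <= dotv v v.
Proof. by apply: sumr_ge0 => i _; rewrite -expr2 sqr_ge0. Qed.

Lemma dotvv_eq0 v : (dotv v v == 0) = (v == 0).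
Proof.
apply/eqP/eqP => [vv0|->]; last exact: dotv0l.
apply/rowP => j; rewrite mxE; apply/eqP; rewrite -sqrf_eq0; apply/eqP.
have /psumr_eq0P : \sum_(i < n) v ord0 i ^+ 2 = 0.
  by rewrite -[RHS]vv0; apply: eq_bigr => i _; rewrite expr2.
by apply=> // i _; exact: sqr_ge0.
Qed.

Lemma enorm_ge0 v : 0 <= enorm v.
Proof. exact: sqrtr_ge0. Qed.

Lemma enorm_sqr v : enorm v ^+ 2 = dotv v v.
Proof. by rewrite sqr_sqrtr // dotvv_ge0. Qed.

Lemma enormN v : enorm (- v) = enorm v.
Proof. by rewrite /enorm dotvNl dotvNr opprK. Qed.

Lemma enormZ (a : R) v : enorm (a *: v) = `|a| * enorm v.
Proof. by rewrite /enorm dotvZl dotvZr mulrA -expr2 sqrtrM ?sqr_ge0 // sqrtr_sqr. Qed.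

Lemma enorm_eq0 v : (enorm v == 0) = (v == 0).
Proof. by rewrite sqrtr_eq0 -dotvv_eq0 eq_le dotvv_ge0 andbT. Qed.

Lemma dotv_le_enormM u v : dotv u v <= enorm u * enorm v.
Proof.
have [->|u0] := eqVneq u 0; first by rewrite dotv0l mulr_ge0 ?enorm_ge0.
have [->|v0] := eqVneq v 0; first by rewrite dotvC dotv0l mulr_ge0 ?enorm_ge0.
have nunv_gt0 : 0 < enorm u * enorm v.
  by rewrite mulr_gt0 // lt_def enorm_eq0 ?u0 ?v0 enorm_ge0.
have := dotvv_ge0 (enorm v *: u - enorm u *: v).
rewrite !dotvBl !dotvBr !dotvZl !dotvZr -!enorm_sqr (dotvC v u) => h.
rewrite -subr_ge0 -(pmulr_rge0 _ nunv_gt0); lra.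
Qed.

Lemma normr_dotv_le u v : `|dotv u v| <= enorm u * enorm v.
Proof.
rewrite ler_norml dotv_le_enormM andbT lerNl -dotvNl -(enormN u).
exact: dotv_le_enormM.
Qed.

Lemma enormD u v : enorm (u + v) <= enorm u + enorm v.
Proof.
rewrite -ler_sqr ?nnegrE ?addr_ge0 ?enorm_ge0 // enorm_sqr sqrrD !enorm_sqr.
rewrite dotvDl !dotvDr (dotvC v u); have := dotv_le_enormM u v; lra.
Qed.

Lemma enorm_sum (I : finType) (F : I -> 'rV[R]_n) :
  enorm (\sum_(i : I) F i) <= \sum_(i : I) enorm (F i).
Proof.
apply: (big_ind2 (fun a b => enorm a <= b)) => [|a b c e ab ce|//].
  by rewrite /enorm dotv0l sqrtr0.
exact: le_trans (enormD _ _) (lerD ab ce).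
Qed.

End EuclideanRowVector.

Definition segment_closed {R : realType} {n : nat} (C : set 'rV[R]_n) :=
  forall x y t, C x -> C y -> 0 <= t <= 1 -> C (x + t *: (y - x)).

Lemma edom_segment_closed {R : realType} {n : nat} (h : 'rV[R]_n -> \bar R) :
  (forall z, h z != -oo%E) -> convex_efun h -> segment_closed (edom h).
Proof.
move=> h_ninfty h_cvx x y t hx hy /andP[t_ge0 t_le1].
have [->|t0] := eqVneq t 0; first by rewrite scale0r addr0.
have [->|t1] := eqVneq t 1; first by rewrite scale1r addrC subrK.
have t01 : 0 < t < 1 by rewrite !lt_def t0 t_ge0 eq_sym t1 t_le1.
have -> : x + t *: (y - x) = t *: y + (1 - t) *: x.
  by rewrite scalerBr scalerBl scale1r addrCA.
apply: le_lt_trans (h_cvx y x t t01) _.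
have fin_h z : edom h z -> h z \is a fin_num.
  by move=> hz; rewrite fin_numE h_ninfty lt_eqF.
by rewrite -(fineK (fin_h x hx)) -(fineK (fin_h y hy)) -!EFinM -EFinD ltry.
Qed.

Lemma is_derive_quadratic {R : realType} (a c s : R) :
  is_derive s 1 (fun u : R => u * a + c * u ^+ 2) (a + c * (2 * s)).
Proof.
have -> : (fun u : R => u * a + c * u ^+ 2) = id * cst a + cst c * id ^+ 2.
  by apply: funext.
apply: is_derive_eq.
by rewrite /= !scaler0 addr0 add0r expr1 /GRing.scale /= !mulr1 mulr_natl.
Qed.

Section DescentLemma.
Context {R : realType} {n : nat} {C : set 'rV[R]_n}.
Context {f : 'rV[R]_n -> R} {g : 'rV[R]_n -> 'rV[R]_n} {L : R}.
Hypothesis C_segment : segment_closed C.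
Hypothesis f_grad : forall z, C z ->
  differentiable f z /\ forall w, 'd f z w = dotv (g z) w.
Hypothesis g_lipschitz : forall y z, C y -> C z ->
  enorm (g y - g z) <= L * enorm (y - z).

Lemma is_derive_along x v t : C (x + t *: v) ->
  is_derive t 1 (fun s : R => f (x + s *: v)) (dotv (g (x + t *: v)) v).
Proof.
move=> Cxtv; have [df dfE] := f_grad _ Cxtv.
have E : (fun h : R => h^-1 *: (((fun s : R => f (x + s *: v)) \o shift t) (h *: 1)
            - f (x + t *: v))) =
         (fun h : R => h^-1 *: ((f \o shift (x + t *: v)) (h *: v) - f (x + t *: v))).
  apply: funext => h /=; congr (_ *: (f _ - _)).
  by rewrite /shift /= [h%:A]mulr1 scalerDl addrCA.
apply: DeriveDef; first by rewrite /derivable E; exact: diff_derivable.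
by rewrite /derive E -/(derive f (x + t *: v) v) deriveE // dfE.
Qed.

(* The quadratic correction [c s^2] is what turns the mean value theorem into
   the sharp constant [L / 2]: with [c = ± L/2 |v|^2] the derivative of the
   corrected function has a sign on [0, 1]. *)
Lemma MVT_along x v c : (forall t, 0 <= t <= 1 -> C (x + t *: v)) ->
  exists2 s, 0 <= s <= 1 &
    f (x + v) - f x - dotv (g x) v - c = dotv (g (x + s *: v) - g x) v - 2 * c * s.
Proof.
move=> Cseg; set a := dotv (g x) v.
set F := (fun s : R => f (x + s *: v)) - (fun u : R => u * a + c * u ^+ 2).
have dF (s : R) : 0 <= s <= 1 ->
    is_derive s 1 F (dotv (g (x + s *: v)) v - (a + c * (2 * s))).
  by move=> hs; apply: is_deriveB; [exact: is_derive_along (Cseg s hs)|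
                                    exact: is_derive_quadratic].
have [s hs FE] : exists2 s, s \in `[0, 1]%R &
    F 1 - F 0 = (dotv (g (x + s *: v)) v - (a + c * (2 * s))) * (1 - 0).
  apply: MVT_segment => // [s|].
    by rewrite in_itv /= => /andP[s0 s1]; apply: dF; rewrite !ltW.
  apply: derivable_within_continuous => s; rewrite in_itv /= => hs.
  by have [] := dF s hs.
exists s; first by move: hs; rewrite in_itv.
have FE' (u : R) : F u = f (x + u *: v) - (u * a + c * u ^+ 2) by [].
move: FE; rewrite !FE' scale1r scale0r addr0 subr0 mulr1 mul0r expr0n /= mulr0 !addr0.
rewrite dotvBl -/a; lra.
Qed.

Lemma descent_lemma x y : C x -> C y ->
  `|f y - f x - dotv (g x) (y - x)| <= L / 2 * enorm (y - x) ^+ 2.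
Proof.
move=> Cx Cy; set v := y - x; set q := L / 2 * enorm v ^+ 2.
have Cseg (t : R) : 0 <= t <= 1 -> C (x + t *: v) by exact: C_segment.
have xvE : x + v = y by rewrite /v addrC subrK.
have slope_le (s : R) : 0 <= s <= 1 -> `|dotv (g (x + s *: v) - g x) v| <= 2 * q * s.
  move=> s01; have /andP[s0 _] := s01.
  apply: le_trans (normr_dotv_le _ _) _.
  have := g_lipschitz _ _ (Cseg s s01) Cx.
  rewrite [x + _ - _]addrC addKr enormZ ger0_norm // => h.
  have -> : 2 * q * s = L * s * enorm v * enorm v by rewrite /q; field.
  by apply: ler_wpM2r; [exact: enorm_ge0|rewrite -mulrA].
rewrite ler_norml; apply/andP; split.
- have [s s01 E] := MVT_along x v (- q) Cseg; rewrite xvE in E.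
  have := slope_le s s01; rewrite ler_norml => /andP[h _].
  have : 2 * - q * s = - (2 * q * s) by ring.
  lra.
- have [s s01 E] := MVT_along x v q Cseg; rewrite xvE in E.
  have := slope_le s s01; rewrite ler_norml => /andP[_ h].
  lra.
Qed.

End DescentLemma.

Lemma normminus_ge0 {R : realType} {n : nat} (S : set 'rV[R]_n) :
  (0 <= normminus S)%E.
Proof. by apply/ereal_infP => _ [s _ <-]; rewrite lee_fin enorm_ge0. Qed.

Lemma normminus_sqr_le {R : realType} {n : nat} (S : set 'rV[R]_n) w :
  S w -> (normminus S * normminus S <= (enorm w ^+ 2)%:E)%E.
Proof.
move=> Sw; have nm_ge0 := normminus_ge0 S.
have nm_le : (normminus S <= (enorm w)%:E)%E.
  by apply: ge_ereal_inf; exists (enorm w)%:E => //; exists w.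
by rewrite expr2 EFinM; apply: lee_pmul.
Qed.

Lemma nondecreasing_weighted_sum_le {R : realType} (K : nat) (a u : nat -> R) :
  (forall k, (k < K)%N -> a k <= a k.+1) -> (forall k, (k <= K)%N -> 0 <= u k) ->
  \sum_(k < K.+1) a k * u k <= a K * \sum_(k < K.+1) u k.
Proof.
move=> a_mono u_ge0.
have a_le j k : (k + j <= K)%N -> a k <= a (k + j)%N.
  elim: j => [|j IH] kjK; first by rewrite addn0.
  have kj_lt : (k + j < K)%N by rewrite addnS in kjK.
  by rewrite addnS; apply: le_trans (IH (ltnW kj_lt)) (a_mono _ kj_lt).
rewrite mulr_sumr; apply: ler_sum => k _.
apply: ler_wpM2r; first exact: u_ge0 (leq_ord k).
by have := a_le (K - k)%N k; rewrite subnKC ?leq_ord //; apply.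
Qed.

Section ProblemFacts.
Context {R : realType} {d m : nat} {P : @problem R d m}.

Lemma smooth_on_grad_shift {f g L y z} : smooth_on P f g L -> domX P y -> domX P z ->
  enorm (g y - g z - L *: (y - z)) <= 2 * L * enorm (y - z).
Proof.
move=> [L_ge0 [_ g_lip]] dy dz.
apply: le_trans (enormD _ _) _; rewrite enormN enormZ ger0_norm //.
have := g_lip _ _ dy dz; lra.
Qed.

Hypothesis SA : standing_assumptions P.

Lemma domX_segment_closed : segment_closed (domX P).
Proof. by case: SA => -[[chi_ninfty _] chi_cvx _] _; exact: edom_segment_closed. Qed.

Lemma chic_fin_num i z : domX P z -> chic P i z \is a fin_num.
Proof. by case: SA => _ [chi_i _]; have [_ [_ [fin _]]] := chi_i i; exact: fin. Qed.

Lemma smooth_on_descent {f g L x y} : smooth_on P f g L -> domX P x -> domX P y ->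
  `|f y - f x - dotv (g x) (y - x)| <= L / 2 * enorm (y - x) ^+ 2.
Proof.
by move=> [_ [f_grad g_lip]]; exact: (descent_lemma domX_segment_closed f_grad g_lip x y).
Qed.

Lemma feas_fine_psi_le y i : feas P y -> fine (psi P i y) <= etaP P ord0 i.
Proof.
move=> [dy psi_le]; rewrite -lee_fin fineK //.
by rewrite /psi fin_numD /= chic_fin_num.
Qed.

Lemma rand_typeI_KKT_weighted K (alpha : nat -> R) (xs : nat -> 'rV[R]_d)
    (ls : nat -> 'rV[R]_m) (b1 b2 : R) :
  (forall k, (k <= K)%N -> 0 < alpha k) ->
  (forall k, feas P (xs k)) -> (forall k i, 0 <= ls k ord0 i) ->
  (\sum_(k < K.+1) (alpha k)%:E *
     (normminus (subdiffL P (xs k) (ls k)) * normminus (subdiffL P (xs k) (ls k)))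
     <= b1%:E)%E ->
  \sum_(k < K.+1) alpha k *
     (\sum_(i < m) ls k ord0 i * `|fine (psi P i (xs k)) - etaP P ord0 i|) <= b2 ->
  let S := \sum_(k < K.+1) alpha k in
  rand_typeI_KKT P K (fun k => alpha k / S) xs ls (S^-1 * Num.max b1 b2).
Proof.
move=> alpha_gt0 xs_feas ls_ge0 stat_le compl_le S.
have S_gt0 : 0 < S.
  rewrite /S big_ord_recr /= ltr_wpDl ?alpha_gt0 //.
  by apply: sumr_ge0 => k _; rewrite ltW // alpha_gt0 // ltnW.
have Sinv_ge0 : 0 <= S^-1 by rewrite invr_ge0 ltW.
split.
- split; first by move=> k kK; rewrite divr_ge0 // ltW // alpha_gt0.
  by rewrite -mulr_suml divff // gt_eqF.
- by move=> k _ _; split.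
- have term_eq k : ((alpha k / S)%:E *
      (normminus (subdiffL P (xs k) (ls k)) * normminus (subdiffL P (xs k) (ls k))) =
    (S^-1)%:E * ((alpha k)%:E *
      (normminus (subdiffL P (xs k) (ls k)) * normminus (subdiffL P (xs k) (ls k)))))%E.
    by rewrite mulrC EFinM -muleA.
  under eq_bigr => k _ do rewrite term_eq.
  rewrite -ge0_sume_distrr => [|k _]; last first.
    apply: mule_ge0; first by rewrite lee_fin; exact/ltW/alpha_gt0/leq_ord.
    exact: mule_ge0 (normminus_ge0 _) (normminus_ge0 _).
  rewrite EFinM; apply: lee_wpmul2l; first by rewrite lee_fin.
  by apply: le_trans stat_le _; rewrite lee_fin le_max lexx.
- have term_eq k : alpha k / S *
      (- \sum_(i < m) ls k ord0 i * (fine (psi P i (xs k)) - etaP P ord0 i)) =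
    S^-1 * (alpha k *
      \sum_(i < m) ls k ord0 i * `|fine (psi P i (xs k)) - etaP P ord0 i|).
    rewrite mulrAC mulrC -sumrN; congr (_ * (_ * _)); apply: eq_bigr => i _.
    by rewrite ler0_norm ?subr_le0 ?feas_fine_psi_le // mulrN.
  under eq_bigr => k _ do rewrite term_eq.
  rewrite -mulr_sumr; apply: ler_wpM2l => //.
  by apply: le_trans compl_le _; rewrite le_max lexx orbT.
Qed.

End ProblemFacts.

Lemma model_subdiff_slope_ge {R : realType} {n : nat} (f : 'rV[R]_n -> R) g L {chi}
    {xk x' v : 'rV[R]_n} :
  subdiff chi x' v -> chi xk \is a fin_num ->
  fine (model f g L chi xk x') - (f xk + fine (chi xk)) + L / 2 * enorm (x' - xk) ^+ 2
    <= dotv (g xk + L *: (x' - xk) + v) (x' - xk).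
Proof.
move=> [chi'_fin subgrad] chik_fin.
have := subgrad xk; rewrite -(fineK chi'_fin) -(fineK chik_fin) -EFinD lee_fin.
rewrite -opprB dotvNr /model -(fineK chi'_fin) -EFinD /= !dotvDl dotvZl -enorm_sqr.
have : L * enorm (x' - xk) ^+ 2 = L / 2 * enorm (x' - xk) ^+ 2 + L / 2 * enorm (x' - xk) ^+ 2.
  by field.
lra.
Qed.

Section LCPGIterates.
Context {R : realType} {d m : nat} {P : @problem R d m}.
Context {x : nat -> 'rV[R]_d} {eta lam : nat -> 'rV[R]_m} {B : R}.
Hypothesis SA : standing_assumptions P.
Hypothesis x0_dom : domX P (x 0%N).
Hypothesis psi_x0_lt : forall i, (psi P i (x 0%N) < (eta 0%N ord0 i)%:E)%E.
Hypothesis eta_le_succ : forall k i, eta k ord0 i <= eta k.+1 ord0 i.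
Hypothesis eta_lt : forall k i, eta k ord0 i < etaP P ord0 i.
Hypothesis x_subfeas : forall k i, (psik P i (x k) (x k.+1) <= (eta k ord0 i)%:E)%E.
Hypothesis lam_mult : forall k,
  subprob_multiplier P (x k) (eta k) (x k.+1) (lam k.+1).
Hypothesis lam_le : forall k, enorm (lam k.+1) <= B.

Lemma x_dom k : domX P (x k).
Proof.
case: k => [//|k]; have [_ [v0 [vs [[chi0_fin _] _ _]]] _] := lam_mult k.
by rewrite /domX /edom /= -(fineK chi0_fin) ltry.
Qed.

Lemma chi0_fin_num k : chi0 P (x k) \is a fin_num.
Proof.
case: SA => -[[chi0_ninfty _] _ _] _.
by rewrite fin_numE chi0_ninfty lt_eqF //; exact: x_dom.
Qed.

Definition step k := x k.+1 - x k.
Definition psi0r k := f0 P (x k) + fine (chi0 P (x k)).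
Definition psir i k := fc P i (x k) + fine (chic P i (x k)).
Definition modelr i k := fine (psik P i (x k) (x k.+1)).

Lemma psi0rE k : psi0 P (x k) = (psi0r k)%:E.
Proof. by rewrite /psi0 -(fineK (chi0_fin_num k)). Qed.

Lemma psirE i k : psi P i (x k) = (psir i k)%:E.
Proof. by rewrite /psi -(fineK (chic_fin_num SA i _ (x_dom k))). Qed.

Lemma modelrE i k : modelr i k =
  fc P i (x k) + dotv (gc P i (x k)) (step k) +
  Lc P ord0 i / 2 * enorm (step k) ^+ 2 + fine (chic P i (x k.+1)).
Proof. by rewrite /modelr /psik /model -(fineK (chic_fin_num SA i _ (x_dom k.+1))). Qed.

Lemma psik_modelrE i k : psik P i (x k) (x k.+1) = (modelr i k)%:E.
Proof. by rewrite modelrE /psik /model -(fineK (chic_fin_num SA i _ (x_dom k.+1))). Qed.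

Lemma modelr_le_eta i k : modelr i k <= eta k ord0 i.
Proof. by rewrite -lee_fin -psik_modelrE. Qed.

Lemma smooth_f0 : smooth_on P (f0 P) (g0 P) (L0 P).
Proof. by case: SA => _ [_ [[smooth _] _]]. Qed.

Lemma smooth_fc i : smooth_on P (fc P i) (gc P i) (Lc P ord0 i).
Proof. by case: SA => _ [_ [[_ smooth] _]]. Qed.

Lemma modelr_sub_psir i k :
  0 <= modelr i k - psir i k.+1 <= Lc P ord0 i * enorm (step k) ^+ 2.
Proof.
have := smooth_on_descent SA (smooth_fc i) (x_dom k) (x_dom k.+1).
rewrite modelrE /psir -/(step k) ler_norml.
have : Lc P ord0 i * enorm (step k) ^+ 2 =
  Lc P ord0 i / 2 * enorm (step k) ^+ 2 + Lc P ord0 i / 2 * enorm (step k) ^+ 2.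
  by field.
lra.
Qed.

Lemma psir_le_eta_iter i k : psir i k <= eta k ord0 i.
Proof.
case: k => [|k]; first by rewrite -lee_fin -psirE ltW.
have /andP[+ _] := modelr_sub_psir i k.
have := modelr_le_eta i k; have := eta_le_succ k i; lra.
Qed.

Lemma psir_le_eta i k : psir i k <= etaP P ord0 i.
Proof. exact: le_trans (psir_le_eta_iter i k) (ltW (eta_lt k i)). Qed.

Lemma x_feas k : feas P (x k).
Proof. by split=> [|i]; [exact: x_dom|rewrite psirE lee_fin psir_le_eta]. Qed.

Lemma lam_ge0 k i : 0 <= lam k.+1 ord0 i.
Proof. by case: (lam_mult k). Qed.

Lemma lam_modelr k i : lam k.+1 ord0 i * modelr i k = lam k.+1 ord0 i * eta k ord0 i.
Proof.
have [_ _ /(_ i)] := lam_mult k.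
by rewrite psik_modelrE -EFinB -EFinM => -[] /eqP; rewrite mulrBr subr_eq0 => /eqP.
Qed.


Lemma psi0r_decrease k : psi0r k.+1 + L0 P / 2 * enorm (step k) ^+ 2 <= psi0r k.
Proof.
have [_ [v0 [vs [v0_sub vs_sub KKT]]] _] := lam_mult k.
set G0 := g0 P (x k) + L0 P *: step k + v0.
set G := fun i => gc P i (x k) + Lc P ord0 i *: step k + vs i.
have KKT_step : dotv G0 (step k) + \sum_(i < m) lam k.+1 ord0 i * dotv (G i) (step k) = 0.
  have := congr1 (dotv^~ (step k)) KKT; rewrite /= dotv0l dotvDl dotv_suml => KKT_dot.
  rewrite [RHS]KKT_dot.
  by congr (_ + _); apply: eq_bigr => i _; rewrite dotvZl.
have G_step_ge0 i : 0 <= lam k.+1 ord0 i * dotv (G i) (step k).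
  have slope := model_subdiff_slope_ge (fc P i) (gc P i) (Lc P ord0 i) (vs_sub i)
    (chic_fin_num SA i _ (x_dom k)).
  have Li_ge0 : 0 <= Lc P ord0 i by case: (smooth_fc i).
  have gap_ge0 : 0 <= lam k.+1 ord0 i * (modelr i k - psir i k).
    by rewrite mulrBr lam_modelr -mulrBr mulr_ge0 ?lam_ge0 // subr_ge0 psir_le_eta_iter.
  apply: le_trans gap_ge0 _; apply: ler_wpM2l; first exact: lam_ge0.
  apply: le_trans slope; rewrite -/(modelr i k) -/(step k) lerDl.
  by rewrite mulr_ge0 ?divr_ge0 ?sqr_ge0.
have G0_step : psi0r k.+1 - psi0r k + L0 P / 2 * enorm (step k) ^+ 2 <= dotv G0 (step k).
  have slope : f0 P (x k) + dotv (g0 P (x k)) (step k) + L0 P / 2 * enorm (step k) ^+ 2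
      + (psi0r k.+1 - f0 P (x k.+1)) - psi0r k + L0 P / 2 * enorm (step k) ^+ 2
      <= dotv G0 (step k).
    have := model_subdiff_slope_ge (f0 P) (g0 P) (L0 P) v0_sub (chi0_fin_num k).
    rewrite /model -(fineK (chi0_fin_num k.+1)) -EFinD /psi0r.
    by rewrite [f0 P (x k.+1) + _]addrC addrK.
  have f0_desc : f0 P (x k.+1) - f0 P (x k) - dotv (g0 P (x k)) (step k)
      <= L0 P / 2 * enorm (step k) ^+ 2.
    have := smooth_on_descent SA smooth_f0 (x_dom k) (x_dom k.+1).
    by rewrite ler_norml => /andP[].
  lra.
have : 0 <= \sum_(i < m) lam k.+1 ord0 i * dotv (G i) (step k).
  by apply: sumr_ge0 => i _; exact: G_step_ge0.
lra.
Qed.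

Lemma psi0star_le k : fine (psi0star P) <= psi0r k.
Proof.
case: SA => _ [_ [_ [star_fin _]]].
rewrite -lee_fin fineK // -psi0rE.
by apply: ge_ereal_inf; exists (psi0 P (x k)) => //; exists (x k) => //; exact: x_feas.
Qed.

Definition D2 := (fine (psi0 P (x 0%N)) - fine (psi0star P)) / L0 P.

Hypothesis L0_gt0 : 0 < L0 P.

Lemma D2_ge0 : 0 <= D2.
Proof. by rewrite /D2 psi0rE divr_ge0 ?subr_ge0 ?psi0star_le // ltW. Qed.

Lemma sum_step_sqr_le K : \sum_(k < K.+1) enorm (step k) ^+ 2 <= 2 * D2.
Proof.
have telescope j : L0 P / 2 * \sum_(k < j) enorm (step k) ^+ 2 <= psi0r 0 - psi0r j.
  elim: j => [|j IH]; first by rewrite big_ord0 mulr0 subrr.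
  by rewrite big_ord_recr mulrDr /=; have := psi0r_decrease j; lra.
have := telescope K.+1; have := psi0star_le K.+1; rewrite /D2 psi0rE /= => star_le tele.
rewrite -(ler_pM2l (_ : 0 < L0 P / 2)) ?divr_gt0 //.
have -> : L0 P / 2 * (2 * ((psi0r 0 - fine (psi0star P)) / L0 P)) =
  psi0r 0 - fine (psi0star P) by field; rewrite gt_eqF.
lra.
Qed.

Lemma sum_lam_Lc_le k : \sum_(i < m) lam k.+1 ord0 i * Lc P ord0 i <= B * enorm (Lc P).
Proof. exact: le_trans (dotv_le_enormM _ _) (ler_wpM2r (enorm_ge0 _) (lam_le k)). Qed.

Lemma subdiffL_small k : exists2 w, subdiffL P (x k.+1) (lam k.+1) w &
  enorm w <= 2 * (L0 P + B * enorm (Lc P)) * enorm (step k).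
Proof.
have [_ [v0 [vs [v0_sub vs_sub KKT]]] _] := lam_mult k.
set w := (g0 P (x k.+1) + v0) + \sum_(i < m) lam k.+1 ord0 i *: (gc P i (x k.+1) + vs i).
exists w; first by exists v0, vs.
have cancel_v (a b c e : 'rV[R]_d) : a + b - (c + e + b) = a - c - e.
  by rewrite [c + e + b]addrC addrKA opprD addrA.
(* subtracting the stationarity equation of the subproblem leaves gradient differences *)
have -> : w = (g0 P (x k.+1) - g0 P (x k) - L0 P *: step k) +
    \sum_(i < m) lam k.+1 ord0 i *: (gc P i (x k.+1) - gc P i (x k) - Lc P ord0 i *: step k).
  rewrite -[LHS]subr0 [X in _ - X]KKT opprD addrACA cancel_v -sumrB; congr (_ + _).
  by apply: eq_bigr => i _; rewrite -scalerBr cancel_v.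
apply: le_trans (enormD _ _) _.
have obj_le := smooth_on_grad_shift smooth_f0 (x_dom k.+1) (x_dom k).
have cons_le : enorm (\sum_(i < m) lam k.+1 ord0 i *:
      (gc P i (x k.+1) - gc P i (x k) - Lc P ord0 i *: step k))
    <= (\sum_(i < m) lam k.+1 ord0 i * Lc P ord0 i) * (2 * enorm (step k)).
  rewrite mulr_suml; apply: le_trans (enorm_sum _ _) _; apply: ler_sum => i _.
  rewrite enormZ ger0_norm ?lam_ge0 // -mulrA; apply: ler_wpM2l; first exact: lam_ge0.
  have := smooth_on_grad_shift (smooth_fc i) (x_dom k.+1) (x_dom k).
  by rewrite mulrCA mulrA.
have := ler_wpM2r (mulr_ge0 (ler0n _ 2) (enorm_ge0 (step k))) (sum_lam_Lc_le k).
rewrite -/(step k) in obj_le; move: obj_le cons_le.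
set e := enorm (step k); set S := \sum_(i < m) _; lra.
Qed.

Lemma complementarity_step_le k :
  \sum_(i < m) lam k.+1 ord0 i * `|fine (psi P i (x k.+1)) - etaP P ord0 i|
  <= B * enorm (etaP P - eta k) + B * enorm (Lc P) * enorm (step k) ^+ 2.
Proof.
have term_le i : lam k.+1 ord0 i * `|fine (psi P i (x k.+1)) - etaP P ord0 i|
    <= lam k.+1 ord0 i * (etaP P - eta k) ord0 i +
       lam k.+1 ord0 i * Lc P ord0 i * enorm (step k) ^+ 2.
  rewrite psirE /= ler0_norm ?subr_le0 ?psir_le_eta // opprB !mxE.
  have /andP[_ gap_le] := modelr_sub_psir i k.
  have := ler_wpM2l (lam_ge0 k i) gap_le; have := lam_modelr k i; lra.
apply: le_trans (ler_sum _ (fun i _ => term_le i)) _.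
rewrite big_split /= -mulr_suml; apply: lerD.
  exact: le_trans (dotv_le_enormM _ _) (ler_wpM2r (enorm_ge0 _) (lam_le k)).
by apply: ler_wpM2r; [exact: sqr_ge0|exact: sum_lam_Lc_le].
Qed.

Lemma B_ge0 : 0 <= B.
Proof. exact: le_trans (enorm_ge0 _) (lam_le 0). Qed.

Section Weighted.
Variables (K : nat) (alpha : nat -> R).
Hypothesis alpha_ge0 : forall k, (k <= K)%N -> 0 <= alpha k.
Hypothesis alpha_mono : forall k, (k < K)%N -> alpha k <= alpha k.+1.

Lemma stationarity_weighted_sum_le :
  (\sum_(k < K.+1) (alpha k)%:E *
     (normminus (subdiffL P (x k.+1) (lam k.+1)) *
      normminus (subdiffL P (x k.+1) (lam k.+1)))
   <= (8 * (L0 P + B * enorm (Lc P)) ^+ 2 * D2 * alpha K)%:E)%E.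
Proof.
set c := 2 * (L0 P + B * enorm (Lc P)).
have c_ge0 : 0 <= c by rewrite mulr_ge0 ?addr_ge0 ?mulr_ge0 ?enorm_ge0 ?B_ge0 ?ltW.
have term_le (k : 'I_K.+1) : ((alpha k)%:E *
    (normminus (subdiffL P (x k.+1) (lam k.+1)) *
     normminus (subdiffL P (x k.+1) (lam k.+1)))
    <= (alpha k * (c ^+ 2 * enorm (step k) ^+ 2))%:E)%E.
  have [w w_sub w_le] := subdiffL_small k.
  rewrite EFinM; apply: lee_wpmul2l; first by rewrite lee_fin alpha_ge0 ?leq_ord.
  apply: le_trans (normminus_sqr_le _ w w_sub) _; rewrite lee_fin -exprMn.
  rewrite lerXn2r ?nnegrE ?enorm_ge0 //; exact: mulr_ge0 c_ge0 (enorm_ge0 _).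
apply: le_trans (lee_sum _ (fun k _ => term_le k)) _; rewrite sumEFin lee_fin.
apply: le_trans (@nondecreasing_weighted_sum_le _ K alpha
  (fun k => c ^+ 2 * enorm (step k) ^+ 2) alpha_mono _) _.
  by move=> k _; rewrite mulr_ge0 ?sqr_ge0.
rewrite -mulr_sumr.
apply: le_trans (ler_wpM2l (alpha_ge0 _ (leqnn K))
  (ler_wpM2l (sqr_ge0 c) (sum_step_sqr_le K))) _.
rewrite [leRHS](_ : _ = alpha K * (c ^+ 2 * (2 * D2))) //; rewrite /c; ring.
Qed.

Lemma complementarity_weighted_sum_le :
  \sum_(k < K.+1) alpha k *
     (\sum_(i < m) lam k.+1 ord0 i * `|fine (psi P i (x k.+1)) - etaP P ord0 i|)
  <= 2 * B * enorm (Lc P) * D2 * alpha K +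
     B * \sum_(k < K.+1) alpha k * enorm (etaP P - eta k).
Proof.
apply: le_trans (ler_sum _ (fun (k : 'I_K.+1) _ =>
  ler_wpM2l (alpha_ge0 _ (leq_ord k)) (complementarity_step_le k))) _.
under eq_bigr do rewrite mulrDr.
rewrite big_split /= addrC mulr_sumr; apply: lerD; last first.
  by apply: ler_sum => k _; rewrite mulrCA.
apply: le_trans (@nondecreasing_weighted_sum_le _ K alpha
  (fun k => B * enorm (Lc P) * enorm (step k) ^+ 2) alpha_mono _) _.
  by move=> k _; rewrite !mulr_ge0 ?sqr_ge0 ?enorm_ge0 ?B_ge0.
rewrite -mulr_sumr.
apply: le_trans (ler_wpM2l (alpha_ge0 _ (leqnn K))
  (ler_wpM2l (mulr_ge0 B_ge0 (enorm_ge0 _)) (sum_step_sqr_le K))) _.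
rewrite [leRHS](_ : _ = alpha K * (B * enorm (Lc P) * (2 * D2))) //; ring.
Qed.

End Weighted.
End LCPGIterates.

Theorem mainTheorem7 (R : realType) (d m : nat) (P : @problem R d m)
  (x : nat -> 'rV[R]_d)
  (etak : nat -> 'rV[R]_m)
  (delta : nat -> 'rV[R]_m)
  (lam : nat -> 'rV[R]_m) (* lam k.+1 = lambda^{k+1} *)
  (B : R) (K : nat) (alpha : nat -> R) :
  standing_assumptions P ->
  0 < L0 P ->
  domX P (x 0%N) ->
  (forall i, (psi P i (x 0%N) < (etak 0%N ord0 i)%:E)%E /\
             etak 0%N ord0 i < etaP P ord0 i) ->
  (forall k, subprob_sol P (x k) (etak k) (x k.+1)) ->
  (forall k, etak k.+1 = etak k + delta k) ->
  (forall k i, 0 < delta k ord0 i) ->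
  (forall k i, etak k.+1 ord0 i < etaP P ord0 i) ->
  etak @ \oo --> etaP P ->
  (forall k, subprob_multiplier P (x k) (etak k) (x k.+1) (lam k.+1)) ->
  (forall y, feas P y -> MFCQ P y) ->
  0 < B ->
  (forall k, enorm (lam k.+1) <= B) ->
  (forall k, (k <= K)%N -> 0 < alpha k) ->
  (forall k, (k < K)%N -> alpha k <= alpha k.+1) ->
  let D := Num.sqrt ((fine (psi0 P (x 0%N)) - fine (psi0star P)) / L0 P) in
  let nL := enorm (Lc P) in
  let bound1 := 8 * (L0 P + B * nL) ^+ 2 * D ^+ 2 * alpha K in
  let bound2 := 2 * B * nL * D ^+ 2 * alpha K +
                B * \sum_(k < K.+1) alpha k * enorm (etaP P - etak k) in
  let S := \sum_(k < K.+1) alpha k in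
  [/\ (\sum_(k < K.+1) (alpha k)%:E *
         (normminus (subdiffL P (x k.+1) (lam k.+1)) *
          normminus (subdiffL P (x k.+1) (lam k.+1))) <= bound1%:E)%E,
      \sum_(k < K.+1) alpha k *
         (\sum_(i < m) lam k.+1 ord0 i *
            `|fine (psi P i (x k.+1)) - etaP P ord0 i|) <= bound2 &
      rand_typeI_KKT P K (fun k => alpha k / S) (fun k => x k.+1)
        (fun k => lam k.+1) (S^-1 * Num.max bound1 bound2)].
Proof.
(* The convergence of [eta^k], MFCQ and [0 < B] only serve to guarantee the bound [B]. *)
move=> SA L0_gt0 x0_dom init x_sol eta_upd delta_gt0 eta_lt_succ _ lam_mult _ _ lam_le
  alpha_gt0 alpha_mono D nL bound1 bound2 S.
have psi_x0_lt i := (init i).1.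
have eta_le_succ k i : etak k ord0 i <= etak k.+1 ord0 i.
  by rewrite eta_upd mxE lerDl ltW.
have eta_lt k i : etak k ord0 i < etaP P ord0 i.
  by case: k => [|k]; [exact: (init i).2|exact: eta_lt_succ].
have x_subfeas k i := (x_sol k).1 i.
have alpha_ge0 k (kK : (k <= K)%N) : 0 <= alpha k := ltW (alpha_gt0 k kK).
have D_sqr : D ^+ 2 = D2 (P := P) (x := x) by rewrite sqr_sqrtr //; apply: D2_ge0.
have stat_le : (\sum_(k < K.+1) (alpha k)%:E *
    (normminus (subdiffL P (x k.+1) (lam k.+1)) *
     normminus (subdiffL P (x k.+1) (lam k.+1))) <= bound1%:E)%E.
  by rewrite /bound1 D_sqr; apply: stationarity_weighted_sum_le.
have compl_le : \sum_(k < K.+1) alpha k *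
    (\sum_(i < m) lam k.+1 ord0 i * `|fine (psi P i (x k.+1)) - etaP P ord0 i|)
    <= bound2.
  by rewrite /bound2 D_sqr; apply: complementarity_weighted_sum_le.
split=> //; apply: rand_typeI_KKT_weighted => // [k|k i].
- by apply: x_feas.
- by apply: lam_ge0.
Qed.
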